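(* Let $\{w^k\}$ be generated by the L-GADMM iteration. Then for every $k\ge0$, $$\|w^{k+1}-w^{k+2}\|_H^2\le\|w^k-w^{k+1}\|_H^2.$$
   Context: Standing setting. Let $m\ge 2$, $\ell$, $n_1,\dots,n_m$ be positive integers. For $i=1,\dots,m$ let $\theta_i:\mathbb{R}^{n_i}\to\mathbb{R}$ be convex, $\mathcal{X}_i\subseteq\mathbb{R}^{n_i}$ nonempty closed convex, $A_i\in\mathbb{R}^{\ell\times n_i}$ of full column rank, and $b\in\mathbb{R}^\ell$. Problem (P): $\min\{\sum_{i=1}^m\theta_i(x_i):\sum_{i=1}^mA_ix_i=b,\ x_i\in\mathcal{X}_i\}$, assumed to have a nonempty solution set. Write $u=(x_1,\dots,x_m)$, $w=(x_1,\dots,x_m,y)$ with $y\in\mathbb{R}^\ell$, $\theta(u)=\sum_i\theta_i(x_i)$, $F(w)=(-A_1^\top y,\dots,-A_m^\top y,\ \sum_iA_ix_i-b)$, $\mathcal{W}=\mathcal{X}_1\times\cdots\times\mathcal{X}_m\times\mathbb{R}^\ell$, and $\mathcal{W}^*=\{w^*\in\mathcal{W}:\theta(u)-\theta(u^* )+(w-w^* )^\top F(w^* )\ge0\ \forall w\in\mathcal{W}\}$ (nonempty). For symmetric $G$, $\|v\|_G^2:=v^\top Gv$; $\|\cdot\|$ is the Euclidean norm. Vectors are partitioned as $w=(R,x_m,y)$ with $R=(x_1,\dots,x_{m-1})$. Parameters: $\rho>0$, $\gamma\in(0,2)$, symmetric positive definite $P_i\in\mathbb{R}^{n_i\times n_i}$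 ($i=1,\dots,m$) such that $G_1\succ0$, where $G_1$ is the symmetric block matrix with diagonal blocks $P_1,\dots,P_{m-1}$ and $(i,j)$ block $-\rho A_i^\top A_j$ for $i\ne j$, $1\le i,j\le m-1$. Matrices (w.r.t. the partition $(R,x_m,y)$): $Q=\begin{pmatrix}G_1&0&0\\0&\rho A_m^\top A_m+P_m&(1-\gamma)A_m^\top\\0&-A_m&\frac1\rho I_\ell\end{pmatrix}$, $M=\begin{pmatrix}I&0&0\\0&I_{n_m}&0\\0&-\rho A_m&\gamma I_\ell\end{pmatrix}$, $H=\begin{pmatrix}G_1&0&0\\0&P_m+\frac\rho\gamma A_m^\top A_m&\frac{1-\gamma}\gamma A_m^\top\\0&\frac{1-\gamma}\gamma A_m&\frac1{\gamma\rho}I_\ell\end{pmatrix}$, $N=Q^\top+Q-M^\top HM$. L-GADMM iteration: from an arbitrary $w^0=(x_1^0,\dots,x_m^0,y^0)\in\mathcal{W}$, for $k=0,1,2,\dots$: $x_j^{k+1}=\arg\min_{x_j\in\mathcal{X}_j}\{\theta_j(x_j)+\frac\rho2\|A_jx_j+\sum_{i=1,i\ne j}^mA_ix_i^k-b-\frac{y^k}\rho\|^2+\frac12\|x_j-x_j^k\|_{P_j}^2\}$ for $j=1,\dots,m-1$; $x_m^{k+1}=\arg\min_{x_m\in\mathcal{X}_m}\{\theta_m(x_m)+\frac\rho2\|\gamma\sum_{i=1}^{m-1}A_ix_i^{k+1}+(1-\gamma)(b-A_mx_m^k)+A_mx_m-b-\frac{y^k}\rho\|^2+\frac12\|x_m-x_m^k\|_{P_m}^2\}$;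 $y^{k+1}=y^k-\rho\big(\gamma\sum_{i=1}^{m-1}A_ix_i^{k+1}+(1-\gamma)(b-A_mx_m^k)+A_mx_m^{k+1}-b\big)$. Auxiliary sequence: $\bar w^k=(\bar x_1^k,\dots,\bar x_m^k,\bar y^k)$ with $\bar x_i^k=x_i^{k+1}$ ($i=1,\dots,m$) and $\bar y^k=y^k-\rho(\sum_{i=1}^{m-1}A_ix_i^{k+1}+A_mx_m^k-b)$; $\bar u^k=(\bar x_1^k,\dots,\bar x_m^k)$, $R^k=(x_1^k,\dots,x_{m-1}^k)$, $\bar R^k=(\bar x_1^k,\dots,\bar x_{m-1}^k)$. *)

From HB Require Import structures.
From mathcomp Require Import all_boot all_order all_algebra.
From mathcomp Require Import all_classical all_reals all_analysis.
Import numFieldNormedType.Exports.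
Unset Printing Implicit Defensive.
Import Order.TTheory GRing.Theory Num.Theory.
Local Open Scope ring_scope.
Local Open Scope classical_set_scope.

Section Defs.
Variable R : realType.

Definition bil {a b} (u : 'cV[R]_a) (M : 'M[R]_(a, b)) (v : 'cV[R]_b) : R :=
  (u^T *m M *m v) 0 0.

Definition qf {a} (G : 'M[R]_a) (v : 'cV[R]_a) : R := bil v G v.

Definition sqn {a} (v : 'cV[R]_a) : R := (v^T *m v) 0 0.

Definition sym_pd a (P : 'M[R]_a) : Prop :=
  P^T = P /\ forall v : 'cV[R]_a, v != 0 -> 0 < qf P v.

End Defs.
Arguments bil {R a b}. Arguments qf {R a}. Arguments sqn {R a}.
Arguments sym_pd {R a}.


(* Blocks are indexed by 'I_p.+1 (so m = p + 1 blocks); the last block x_m is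
   ord_max, the blocks x_1..x_{m-1} (forming R) are the i with i != ord_max. *)
Section Iter.
Variables (R : realType) (p l : nat) (n : 'I_p.+1 -> nat).
Variables (A : forall i, 'M[R]_(l, n i)) (P : forall i, 'M[R]_(n i)) (rho gam : R).

Notation blocks := (forall i : 'I_p.+1, 'cV[R]_(n i)).

(* ||R||_{G_1}^2 where G_1 has diagonal blocks P_i and (i,j) block -rho A_i^T A_j,
   for i, j ranging over the first m-1 blocks; the entries for ord_max are ignored. *)
Definition G1form (x : blocks) : R :=
  \sum_(i | i != ord_max) qf (P i) (x i)
  + \sum_(i | i != ord_max) \sum_(j | (j != ord_max) && (j != i))
       bil (x i) (- rho *: ((A i)^T *m A j)) (x j).

Definition G1_pd : Prop :=
  forall x : blocks, (exists i, (i != ord_max) && (x i != 0)) -> 0 < G1form x.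

(* ||w||_H^2 = w^T H w, expanded along the partition (R, x_m, y). *)
Definition Hform (x : blocks) (y : 'cV[R]_l) : R :=
  let xm := x ord_max in
  G1form x
  + qf (P ord_max + (rho / gam) *: ((A ord_max)^T *m A ord_max)) xm
  + bil xm (((1 - gam) / gam) *: (A ord_max)^T) y
  + bil y (((1 - gam) / gam) *: A ord_max) xm
  + qf ((gam * rho)^-1%:M) y.

Definition Axsum (x : blocks) : 'cV[R]_l := \sum_i (A i *m x i).

Section Problem.
Variables (theta : forall i, 'cV[R]_(n i) -> R) (X : forall i, set 'cV[R]_(n i))
          (b : 'cV[R]_l).

Definition thetasum (x : blocks) : R := \sum_i theta i (x i).

Definition feasible (x : blocks) : Prop := Axsum x = b /\ forall i, X i (x i).

Definition P_solvable : Prop :=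
  exists xs : blocks, feasible xs /\ forall x : blocks, feasible x -> thetasum xs <= thetasum x.

(* w* in W* :  theta(u) - theta(u* ) + (w - w* )^T F(w* ) >= 0 for all w in W,
   with F(w) = (-A_1^T y, ..., -A_m^T y, sum_i A_i x_i - b). *)
Definition in_Wstar (xs : blocks) (ys : 'cV[R]_l) : Prop :=
  (forall i, X i (xs i)) /\
  forall (x : blocks) (y : 'cV[R]_l), (forall i, X i (x i)) ->
    0 <= thetasum x - thetasum xs
         + \sum_i ((x i - xs i)^T *m (- ((A i)^T *m ys))) 0 0
         + ((y - ys)^T *m (Axsum xs - b)) 0 0.

Definition lgadmm_seq (x : nat -> blocks) (y : nat -> 'cV[R]_l) : Prop :=
  (forall i, X i (x 0%N i)) /\
  forall k : nat,
    (forall j : 'I_p.+1, j != ord_max ->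
       X j (x k.+1 j) /\
       let obj := fun z : 'cV[R]_(n j) =>
         theta j z
         + rho / 2 * sqn (A j *m z + \sum_(i | i != j) (A i *m x k i) - b - rho^-1 *: y k)
         + 1 / 2 * qf (P j) (z - x k j) in
       forall z, X j z -> obj (x k.+1 j) <= obj z)
    /\
    (X ord_max (x k.+1 ord_max) /\
       let obj := fun z : 'cV[R]_(n ord_max) =>
         theta ord_max z
         + rho / 2 * sqn (gam *: \sum_(i | i != ord_max) (A i *m x k.+1 i)
                          + (1 - gam) *: (b - A ord_max *m x k ord_max)
                          + A ord_max *m z - b - rho^-1 *: y k)
         + 1 / 2 * qf (P ord_max) (z - x k ord_max) in
       forall z, X ord_max z -> obj (x k.+1 ord_max) <= obj z)
    /\
    y k.+1 = y k - rho *: (gam *: \sum_(i | i != ord_max) (A i *m x k.+1 i)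
                          + (1 - gam) *: (b - A ord_max *m x k ord_max)
                          + A ord_max *m x k.+1 ord_max - b).

End Problem.

Definition blocks_sub (x z : blocks) : blocks := fun i => x i - z i.

End Iter.
Arguments G1form {R p l n}. Arguments G1_pd {R p l n}. Arguments Hform {R p l n}.
Arguments Axsum {R p l n}. Arguments thetasum {R p n}. Arguments feasible {R p l n}.
Arguments P_solvable {R p l n}. Arguments in_Wstar {R p l n}.
Arguments lgadmm_seq {R p l n}. Arguments blocks_sub {R p n}.

From HB Require Import structures.
From mathcomp Require Import all_boot all_order all_algebra.
From mathcomp Require Import all_classical all_reals all_analysis.
From mathcomp Require Import ring lra.
Import numFieldNormedType.Exports.
Import Order.TTheory GRing.Theory Num.Theory.
Local Open Scope ring_scope.
Local Open Scope classical_set_scope.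

(* Each subproblem is a proximal least-squares step, so its minimizer satisfies a
   variational inequality.  Writing it at iterations k and k+1 and testing each one
   with the other's minimizer cancels the objective terms theta_i (monotonicity), and
   leaves, for D := w^{k+1} - w^{k+2} and W := (w^k - w^{k+1}) - D, the inequalities
   <D, ...> >= 0 of nonlast_blocks_ineq and last_block_ineq.  Expressing
   y^k - y^{k+1} through y^{k+1} - y^{k+2} by the multiplier update and completing the
   square, |w^k - w^{k+1}|_H^2 - |D|_H^2 equals twice those quantities plus
   |W_R|_{G_1}^2 + |W_m|_{P_m}^2 + (2 - gam) rho |A_R D_R + A_m (x_m^k - x_m^{k+1})|^2,
   all nonnegative since G_1, P_m > 0 and gam < 2. *)

Section Dot.
Context {R : realType}.

Definition dot {k} (u v : 'cV[R]_k) : R := (u^T *m v) 0 0.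

Lemma dotE {k} (u v : 'cV[R]_k) : dot u v = \sum_i u i 0 * v i 0.
Proof. by rewrite /dot mxE; apply: eq_bigr => i _; rewrite mxE. Qed.

Lemma dotC {k} (u v : 'cV[R]_k) : dot u v = dot v u.
Proof. by rewrite !dotE; apply: eq_bigr => i _; rewrite mulrC. Qed.

Lemma dotDl {k} (u v w : 'cV[R]_k) : dot (u + v) w = dot u w + dot v w.
Proof. by rewrite !dotE -big_split; apply: eq_bigr => i _; rewrite mxE mulrDl. Qed.

Lemma dotZl {k} a (u w : 'cV[R]_k) : dot (a *: u) w = a * dot u w.
Proof. by rewrite !dotE mulr_sumr; apply: eq_bigr => i _; rewrite mxE mulrA. Qed.

Lemma dotNl {k} (u w : 'cV[R]_k) : dot (- u) w = - dot u w.
Proof. by rewrite -scaleN1r dotZl mulN1r. Qed.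

Lemma dotBl {k} (u v w : 'cV[R]_k) : dot (u - v) w = dot u w - dot v w.
Proof. by rewrite dotDl dotNl. Qed.

Lemma dot0l {k} (w : 'cV[R]_k) : dot 0 w = 0.
Proof. by rewrite dotE big1 // => i _; rewrite mxE mul0r. Qed.

Lemma dotDr {k} (u v w : 'cV[R]_k) : dot w (u + v) = dot w u + dot w v.
Proof. by rewrite !(dotC w) dotDl. Qed.

Lemma dotZr {k} a (u w : 'cV[R]_k) : dot w (a *: u) = a * dot w u.
Proof. by rewrite !(dotC w) dotZl. Qed.

Lemma dotNr {k} (u w : 'cV[R]_k) : dot w (- u) = - dot w u.
Proof. by rewrite !(dotC w) dotNl. Qed.

Lemma dotBr {k} (u v w : 'cV[R]_k) : dot w (u - v) = dot w u - dot w v.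
Proof. by rewrite !(dotC w) dotBl. Qed.

Lemma dot0r {k} (w : 'cV[R]_k) : dot w 0 = 0.
Proof. by rewrite dotC dot0l. Qed.

Lemma dot_suml {k} I (r : seq I) (Pr : pred I) (f : I -> 'cV[R]_k) w :
  dot (\sum_(i <- r | Pr i) f i) w = \sum_(i <- r | Pr i) dot (f i) w.
Proof. exact: (big_morph (fun u => dot u w) (fun u v => dotDl u v w) (dot0l w)). Qed.

Lemma dot_sumr {k} I (r : seq I) (Pr : pred I) (f : I -> 'cV[R]_k) w :
  dot w (\sum_(i <- r | Pr i) f i) = \sum_(i <- r | Pr i) dot w (f i).
Proof. by rewrite dotC dot_suml; apply: eq_bigr => i _; rewrite dotC. Qed.

Lemma dot_mulmx {a b} (M : 'M[R]_(a, b)) u v : dot u (M *m v) = dot (M^T *m u) v.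
Proof. by rewrite /dot trmx_mul trmxK mulmxA. Qed.

Lemma dot_trmx {a b} (M : 'M[R]_(a, b)) u v : dot u (M^T *m v) = dot (M *m u) v.
Proof. by rewrite dot_mulmx trmxK. Qed.

Lemma dot_sym {a} (M : 'M[R]_a) u v : M^T = M -> dot u (M *m v) = dot v (M *m u).
Proof. by move=> MT; rewrite dot_mulmx MT dotC. Qed.

Lemma bilE {a b} (u : 'cV[R]_a) (M : 'M[R]_(a, b)) v : bil u M v = dot u (M *m v).
Proof. by rewrite /bil /dot mulmxA. Qed.

Lemma qfE {a} (M : 'M[R]_a) v : qf M v = dot v (M *m v).
Proof. exact: bilE. Qed.

Lemma sqnE {a} (v : 'cV[R]_a) : sqn v = dot v v.
Proof. by []. Qed.

Lemma dot_ge0 {a} (v : 'cV[R]_a) : 0 <= dot v v.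
Proof. by rewrite dotE sumr_ge0 // => i _; rewrite -expr2 sqr_ge0. Qed.

Lemma sym_pd_ge0 {a} {M : 'M[R]_a} v : sym_pd M -> 0 <= dot v (M *m v).
Proof.
case=> _ Mpos; have [->|v0] := eqVneq v 0; first by rewrite mulmx0 dot0r.
by rewrite -qfE; apply/ltW/Mpos.
Qed.

Lemma dot_expand {a} (u v : 'cV[R]_a) t :
  dot (u + t *: v) (u + t *: v) = dot u u + t * (2 * dot u v) + t ^+ 2 * dot v v.
Proof. rewrite !(dotDl, dotDr, dotZl, dotZr) (dotC v u); ring. Qed.

Lemma dot_sym_expand {a} (M : 'M[R]_a) u v t : M^T = M ->
  dot (u + t *: v) (M *m (u + t *: v)) =
  dot u (M *m u) + t * (2 * dot v (M *m u)) + t ^+ 2 * dot v (M *m v).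
Proof.
move=> MT; rewrite mulmxDr -scalemxAr !(dotDl, dotDr, dotZl, dotZr).
rewrite [dot u (M *m v)]dot_sym //; ring.
Qed.

Lemma dot_sym_addE {a} (M : 'M[R]_a) u v : M^T = M ->
  dot (u + v) (M *m (u + v)) = dot u (M *m u) + 2 * dot u (M *m v) + dot v (M *m v).
Proof.
by move=> MT; rewrite !(mulmxDr, dotDl, dotDr) [dot v (M *m u)]dot_sym //; ring.
Qed.

End Dot.

Section FirstOrderOptimality.
Context {R : realType}.

Lemma ge0_of_ge0_perturbation (a M : R) :
  (forall t, 0 < t -> t <= 1 -> 0 <= a + t * M) -> 0 <= a.
Proof.
move=> H; rewrite leNgt; apply/negP => a0.
pose K := `|M| - a.
have K0 : 0 < K by rewrite /K; have := normr_ge0 M; lra.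
have t0 : 0 < - a / K by rewrite divr_gt0 // oppr_gt0.
have t1 : - a / K <= 1 by rewrite ler_pdivrMr // mul1r /K; have := normr_ge0 M; lra.
have hM : - a / K * M <= - a / K * `|M|.
  by rewrite ler_pM2l // real_ler_norm // num_real.
(* the witness t = -a/K gives a + t|M| = -a^2/K < 0 *)
have e : a + - a / K * `|M| = - (a * a) / K.
  by rewrite /K; field; rewrite -/K; exact: lt0r_neq0.
have : 0 < (a * a) / K by rewrite divr_gt0 //; nra.
have := H _ t0 t1; rewrite mulNr in e; lra.
Qed.

Lemma prox_step_vi {k l} {th : 'cV[R]_k -> R} {X : set 'cV[R]_k}
    {A : 'M[R]_(l, k)} {P : 'M[R]_k} {F : 'cV[R]_k -> 'cV[R]_l} {c : 'cV[R]_l}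
    {rho : R} {o a b : 'cV[R]_k} :
  convex_function setT th -> convex_set X -> P^T = P ->
  (forall z, F z = A *m z + c) -> X a -> X b ->
  (forall z, X z -> th a + rho / 2 * sqn (F a) + 1 / 2 * qf P (a - o)
                 <= th z + rho / 2 * sqn (F z) + 1 / 2 * qf P (z - o)) ->
  0 <= th b - th a + rho * dot (A *m (b - a)) (F a) + dot (b - a) (P *m (a - o)).
Proof.
move=> thcvx Xcvx PT hF Xa Xb amin; set d := b - a.
apply: (@ge0_of_ge0_perturbation _ (rho / 2 * dot (A *m d) (A *m d) + 1 / 2 * dot d (P *m d))).
move=> t t0 t1; pose z := t *: b + (1 - t) *: a.
have Xz : X z.
  by have := Xcvx b a (Itv01 (ltW t0) t1) (mem_set Xb) (mem_set Xa); rewrite inE.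
have thz : th z <= t * th b + (1 - t) * th a.
  by have := thcvx (Itv01 (ltW t0) t1) b a (mem_set I) (mem_set I); rewrite /= convRE.
have ez : z = a + t *: d by apply/matrixP => i j; rewrite !mxE; ring.
have eF : F z = F a + t *: (A *m d).
  by rewrite !hF ez mulmxDr -scalemxAr; apply/matrixP => i j; rewrite !mxE; ring.
have eo : z - o = (a - o) + t *: d by rewrite ez; apply/matrixP => i j; rewrite !mxE; ring.
have := amin z Xz; rewrite !sqnE !qfE eF eo dot_expand dot_sym_expand //.
rewrite [dot d (P *m (a - o))]dot_sym // (dotC (A *m d) (F a)).
set Fa := dot (F a) (F a); set Po := dot (a - o) (P *m (a - o)).
set X1 := dot (F a) (A *m d); set X2 := dot (a - o) (P *m d).
set Y1 := dot (A *m d) (A *m d); set Y2 := dot d (P *m d) => hmin.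
rewrite -(pmulr_rge0 _ t0).
have -> : t * (th b - th a + rho * X1 + X2 + t * (rho / 2 * Y1 + 1 / 2 * Y2))
    = (t * th b + (1 - t) * th a - th z) + ((th z + rho / 2 * (Fa + t * (2 * X1) + t ^+ 2 * Y1) +
         1 / 2 * (Po + t * (2 * X2) + t ^+ 2 * Y2)) - (th a + rho / 2 * Fa + 1 / 2 * Po)).
  by field.
by apply: addr_ge0; rewrite subr_ge0.
Qed.

Lemma prox_steps_monotone {k l} {th : 'cV[R]_k -> R} {X : set 'cV[R]_k}
    {A : 'M[R]_(l, k)} {P : 'M[R]_k} {F F' : 'cV[R]_k -> 'cV[R]_l} {c c' : 'cV[R]_l}
    {rho : R} {o a b : 'cV[R]_k} :
  convex_function setT th -> convex_set X -> P^T = P ->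
  (forall z, F z = A *m z + c) -> (forall z, F' z = A *m z + c') -> X a -> X b ->
  (forall z, X z -> th a + rho / 2 * sqn (F a) + 1 / 2 * qf P (a - o)
                 <= th z + rho / 2 * sqn (F z) + 1 / 2 * qf P (z - o)) ->
  (forall z, X z -> th b + rho / 2 * sqn (F' b) + 1 / 2 * qf P (b - a)
                 <= th z + rho / 2 * sqn (F' z) + 1 / 2 * qf P (z - a)) ->
  0 <= rho * dot (A *m (a - b)) (F' b - F a) + dot (a - b) (P *m ((o - a) - (a - b))).
Proof.
move=> thcvx Xcvx PT hF hF' Xa Xb amin bmin.
have va := prox_step_vi thcvx Xcvx PT hF Xa Xb amin.
have vb := prox_step_vi thcvx Xcvx PT hF' Xb Xa bmin.
apply: (le_trans (addr_ge0 va vb)); rewrite le_eqVlt; apply/orP; left; apply/eqP.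
rewrite -[b - a]opprB -[a - o]opprB !mulmxN !(dotNl, dotNr, dotBr, mulmxBr).
ring.
Qed.

End FirstOrderOptimality.

(* Completing the square: the right side minus the left side equals twice the first
   two nonnegative quantities plus the last two plus (2 - gam) rho |s + c|^2. *)
Lemma lgadmm_quadratic_bound {R : realType} l (s sW Y a c : 'cV[R]_l) (rho gam : R)
    (tDD tDW tWW pDD pDW pWW : R) :
  0 < rho -> 0 < gam < 2 ->
  let Z := Y + rho *: (gam *: s - (1 - gam) *: c + a) in
  0 <= dot s Z - rho * dot s (s + sW + c) + tDW ->
  0 <= dot a Y + pDW ->
  0 <= tWW - rho * dot sW sW -> 0 <= pWW ->
  (tDD - rho * dot s s) + pDD + rho / gam * dot a a + 2 * ((1 - gam) / gam) * dot a Y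
    + (gam * rho)^-1 * dot Y Y
  <= (tDD + 2 * tDW + tWW - rho * dot (s + sW) (s + sW)) + (pDD + 2 * pDW + pWW)
    + rho / gam * dot c c + 2 * ((1 - gam) / gam) * dot c Z + (gam * rho)^-1 * dot Z Z.
Proof.
move=> rho0 /andP[gam0 gam2] Z h1 h2 h3 h4.
have sc0 : 0 <= (2 - gam) * rho * dot (s + c) (s + c).
  by rewrite !mulr_ge0 ?dot_ge0 ?subr_ge0 // ltW.
rewrite -subr_ge0.
suff -> : (tDD + 2 * tDW + tWW - rho * dot (s + sW) (s + sW)) + (pDD + 2 * pDW + pWW)
    + rho / gam * dot c c + 2 * ((1 - gam) / gam) * dot c Z + (gam * rho)^-1 * dot Z Z
    - ((tDD - rho * dot s s) + pDD + rho / gam * dot a a + 2 * ((1 - gam) / gam) * dot a Y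
    + (gam * rho)^-1 * dot Y Y)
  = 2 * (dot s Z - rho * dot s (s + sW + c) + tDW) + 2 * (dot a Y + pDW)
    + (tWW - rho * dot sW sW) + pWW + (2 - gam) * rho * dot (s + c) (s + c).
  lra.
rewrite /Z !(dotDl, dotDr, dotBl, dotBr, dotNl, dotNr, dotZl, dotZr).
rewrite ?(dotC sW s) ?(dotC Y s) ?(dotC a s) ?(dotC c s) ?(dotC Y sW) ?(dotC a sW)
  ?(dotC c sW) ?(dotC a Y) ?(dotC c Y) ?(dotC c a).
by field; rewrite !lt0r_neq0.
Qed.

Section BlockForms.
Context {R : realType} {p l : nat} {n : 'I_p.+1 -> nat}.
Variables (A : forall i, 'M[R]_(l, n i)) (P : forall i, 'M[R]_(n i)) (rho gam : R).
Notation blocks := (forall i : 'I_p.+1, 'cV[R]_(n i)).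
Local Notation om := (@ord_max p).

Definition Rsum (u : blocks) : 'cV[R]_l := \sum_(i | i != om) A i *m u i.

(* [G_1 + rho A_R^T A_R] is block diagonal, with blocks [P_i + rho A_i^T A_i]. *)
Definition G1diag (u v : blocks) : R :=
  \sum_(i | i != om) (dot (u i) (P i *m v i) + rho * dot (A i *m u i) (A i *m v i)).

Lemma G1formE (u : blocks) : G1form A P rho u = G1diag u u - rho * dot (Rsum u) (Rsum u).
Proof.
rewrite /G1form /G1diag /Rsum dot_suml.
have offdiag i : i != om ->
  \sum_(j | (j != om) && (j != i)) bil (u i) (- rho *: ((A i)^T *m A j)) (u j)
  = - rho * (dot (A i *m u i) (\sum_(j | j != om) A j *m u j)
             - dot (A i *m u i) (A i *m u i)).
  move=> iom; rewrite dot_sumr [in RHS](bigD1 i) //= [X in _ = _ * X]addrC addKr.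
  rewrite mulr_sumr; apply: eq_bigr => j _.
  by rewrite bilE -scalemxAl -mulmxA dotZr dot_trmx.
rewrite (eq_bigr _ offdiag) -mulr_sumr sumrB mulrBr big_split /= -mulr_sumr.
under [X in X + _]eq_bigr do rewrite qfE.
ring.
Qed.

Lemma HformE (u : blocks) yv :
  Hform A P rho gam u yv = G1form A P rho u + dot (u om) (P om *m u om)
   + rho / gam * dot (A om *m u om) (A om *m u om)
   + 2 * ((1 - gam) / gam) * dot (A om *m u om) yv
   + (gam * rho)^-1 * dot yv yv.
Proof.
rewrite /Hform /= !qfE !bilE mulmxDl -scalemxAl -mulmxA dotDr dotZr dot_trmx.
by rewrite -!scalemxAl !dotZr dot_trmx mul_scalar_mx dotZr (dotC yv); ring.
Qed.

Lemma Rsum_split (E D : blocks) : Rsum E = Rsum D + Rsum (blocks_sub E D).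
Proof.
rewrite /Rsum -big_split /=; apply: eq_bigr => i _.
by rewrite -mulmxDr /blocks_sub addrC subrK.
Qed.

Lemma G1diag_split (E D : blocks) : (forall i, (P i)^T = P i) ->
  G1diag E E = G1diag D D + 2 * G1diag D (blocks_sub E D)
               + G1diag (blocks_sub E D) (blocks_sub E D).
Proof.
move=> PT; rewrite /G1diag mulr_sumr -!big_split; apply: eq_bigr => i _ /=.
rewrite /blocks_sub !(mulmxBr, dotBl, dotBr) [dot (E i) (P i *m D i)]dot_sym //.
by rewrite (dotC (A i *m E i) (A i *m D i)); ring.
Qed.

Lemma G1form_ge0 (u : blocks) : G1_pd A P rho -> 0 <= G1form A P rho u.
Proof.
move=> G1pos; case: (pselect (exists i, (i != om) && (u i != 0))) => [/G1pos/ltW//|uR0].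
have u0 i : i != om -> u i = 0.
  by move=> iom; apply/eqP; apply: contra_notT uR0 => ui0; exists i; apply/andP.
rewrite /G1form big1 ?add0r => [|i iom]; last by rewrite u0 // qfE dot0l.
by rewrite big1 // => i iom; rewrite big1 // => j _; rewrite u0 // bilE dot0l.
Qed.

End BlockForms.
Arguments Rsum_split {R p l n} A.
Arguments G1diag_split {R p l n} A P rho.
Arguments G1form_ge0 {R p l n A P rho}.

Section LGADMM.
Variables (R : realType) (p l : nat) (n : 'I_p.+1 -> nat)
  (theta : forall i, 'cV[R]_(n i) -> R) (X : forall i, set 'cV[R]_(n i))
  (A : forall i, 'M[R]_(l, n i)) (b : 'cV[R]_l)
  (rho gam : R) (P : forall i, 'M[R]_(n i))
  (x : nat -> forall i, 'cV[R]_(n i)) (y : nat -> 'cV[R]_l).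
Hypotheses (theta_cvx : forall i, convex_function setT (theta i))
  (X_cvx : forall i, convex_set (X i)) (rho_gt0 : 0 < rho)
  (P_sym : forall i, (P i)^T = P i) (lgadmm : lgadmm_seq A P rho gam theta X b x y).

Local Notation om := (@ord_max p).
Local Notation dx k := (blocks_sub (x k) (x k.+1)).
Local Notation dy k := (y k - y k.+1).

Lemma nonlast_block_ineq k j : j != om ->
  0 <= rho * dot (A j *m dx k.+1 j)
                 (rho^-1 *: dy k - (A j *m dx k.+1 j - A j *m dx k j) - \sum_i A i *m dx k i)
       + dot (dx k.+1 j) (P j *m (dx k j - dx k.+1 j)).
Proof.
move=> jom; have [Xa amin] := (lgadmm.2 k).1 j jom.
have [Xb bmin] := (lgadmm.2 k.+1).1 j jom.
pose F t z := A j *m z + \sum_(i | i != j) (A i *m x t i) - b - rho^-1 *: y t.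
pose c t := \sum_(i | i != j) (A i *m x t i) - b - rho^-1 *: y t.
have hF t z : F t z = A j *m z + c t by rewrite /F /c !addrA.
have := prox_steps_monotone (theta_cvx j) (X_cvx j) (P_sym j) (hF k) (hF k.+1) Xa Xb amin bmin.
rewrite /F.
have -> : \sum_(i | i != j) A i *m x k.+1 i = \sum_(i | i != j) A i *m x k i
          - (\sum_i A i *m dx k i - A j *m dx k j).
  rewrite [X in _ - (X - _)](bigD1 j) //= addrC addrK.
  under [X in _ = _ - X]eq_bigr do rewrite mulmxBr.
  by rewrite sumrB opprB addrC subrK.
rewrite /blocks_sub !mulmxBr => h; apply: le_trans h _.
rewrite le_eqVlt; apply/orP; left; apply/eqP; congr (_ * dot _ _ + _).
by apply/matrixP => r s; rewrite !mxE; field; rewrite lt0r_neq0.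
Qed.

(* At the optimum the residual of the last subproblem is exactly [- y^{k+1} / rho]. *)
Lemma last_block_ineq k :
  0 <= dot (A om *m dx k.+1 om) (dy k.+1) + dot (dx k.+1 om) (P om *m (dx k om - dx k.+1 om)).
Proof.
pose F t z := gam *: \sum_(i | i != om) (A i *m x t.+1 i) + (1 - gam) *: (b - A om *m x t om)
    + A om *m z - b - rho^-1 *: y t.
pose c t := gam *: \sum_(i | i != om) (A i *m x t.+1 i) + (1 - gam) *: (b - A om *m x t om)
    - b - rho^-1 *: y t.
have hF t z : F t z = A om *m z + c t.
  by rewrite /F /c; apply/matrixP => r s; rewrite !mxE; ring.
have Fopt t : F t (x t.+1 om) = - (rho^-1 *: y t.+1).
  have [_ [_ ->]] := lgadmm.2 t.
  by apply/matrixP => r s; rewrite !mxE; field; rewrite lt0r_neq0.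
have [_ [[Xa amin] _]] := lgadmm.2 k.
have [_ [[Xb bmin] _]] := lgadmm.2 k.+1.
have := prox_steps_monotone (theta_cvx om) (X_cvx om) (P_sym om) (hF k) (hF k.+1) Xa Xb amin bmin.
rewrite !Fopt /blocks_sub => h; apply: le_trans h _.
rewrite le_eqVlt; apply/orP; left; apply/eqP; congr (_ + _).
have -> : - (rho^-1 *: y k.+2) - - (rho^-1 *: y k.+1) = rho^-1 *: dy k.+1.
  by rewrite scalerBr opprK addrC.
by rewrite dotZr mulrA mulfV ?lt0r_neq0 // mul1r.
Qed.

Lemma dy_recursion k :
  dy k = dy k.+1 + rho *: (gam *: Rsum A (dx k.+1) - (1 - gam) *: (A om *m dx k om)
                           + A om *m dx k.+1 om).
Proof.
have [_ [_ ->]] := lgadmm.2 k.+1; have [_ [_ ->]] := lgadmm.2 k.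
have -> : Rsum A (dx k.+1) =
          \sum_(i | i != om) A i *m x k.+1 i - \sum_(i | i != om) A i *m x k.+2 i.
  by rewrite /Rsum -sumrB; apply: eq_bigr => i _; rewrite mulmxBr.
by rewrite /blocks_sub !mulmxBr; apply/matrixP => r s; rewrite !mxE; ring.
Qed.

Lemma nonlast_blocks_ineq k :
  0 <= dot (Rsum A (dx k.+1)) (dy k)
       - rho * dot (Rsum A (dx k.+1)) (Rsum A (dx k) + A om *m dx k om)
       + G1diag A P rho (dx k.+1) (blocks_sub (dx k) (dx k.+1)).
Proof.
have -> : Rsum A (dx k) + A om *m dx k om = \sum_i A i *m dx k i.
  by rewrite [RHS](bigD1 om) //= addrC.
rewrite /Rsum /G1diag !dot_suml mulr_sumr -sumrB -big_split /=.
apply: sumr_ge0 => j jom; have := nonlast_block_ineq k j jom.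
rewrite -[blocks_sub (dx k) (dx k.+1) j]/(dx k j - dx k.+1 j).
set u := A j *m dx k.+1 j; set e := A j *m dx k j; set S := \sum_i A i *m dx k i.
rewrite !(mulmxBr (A j) (dx k j)) -/u -/e !(dotBr, dotZr) => h; apply: le_trans h _.
by rewrite le_eqVlt; apply/orP; left; apply/eqP; field; rewrite lt0r_neq0.
Qed.

Lemma Hform_dx_nonincreasing k :
  G1_pd A P rho -> (forall i, sym_pd (P i)) -> 0 < gam < 2 ->
  Hform A P rho gam (dx k.+1) (dy k.+1) <= Hform A P rho gam (dx k) (dy k).
Proof.
move=> G1pos Ppd gam02; set D := dx k.+1; set E := dx k; set W := blocks_sub E D.
have PE : dot (E om) (P om *m E om) = dot (D om) (P om *m D om)
           + 2 * dot (D om) (P om *m W om) + dot (W om) (P om *m W om).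
  by rewrite -dot_sym_addE // /W /blocks_sub addrC subrK.
have h1 := nonlast_blocks_ineq k; have h2 := last_block_ineq k.
have h3 := G1form_ge0 W G1pos; rewrite G1formE in h3.
rewrite -/D -/E (Rsum_split A E D) -/W (dy_recursion k) -/D -/E in h1.
rewrite !HformE !G1formE (G1diag_split A P rho E D) // (Rsum_split A E D) -/W.
rewrite PE (dy_recursion k) -/D -/E.
move: h1 h2 h3 (sym_pd_ge0 (W om) (Ppd om)); exact: lgadmm_quadratic_bound.
Qed.

End LGADMM.
Arguments Hform_dx_nonincreasing {R p l n theta X A b rho gam P x y}.

Theorem theorem4p4 (R : realType) (p l : nat) (n : 'I_p.+1 -> nat)
  (hp : (1 <= p)%N) (hl : (0 < l)%N) (hn : forall i, (0 < n i)%N)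
  (theta : forall i, 'cV[R]_(n i) -> R) (X : forall i, set 'cV[R]_(n i))
  (A : forall i, 'M[R]_(l, n i)) (b : 'cV[R]_l)
  (rho gam : R) (P : forall i, 'M[R]_(n i))
  (htheta : forall i, convex_function setT (theta i))
  (hX0 : forall i, X i !=set0) (hXc : forall i, closed (X i))
  (hXcv : forall i, convex_set (X i))
  (hA : forall i, \rank (A i) = n i)
  (hsol : P_solvable A theta X b)
  (hWstar : exists xs ys, in_Wstar A theta X b xs ys)
  (hrho : 0 < rho) (hgam : 0 < gam < 2)
  (hP : forall i, sym_pd (P i))
  (hG1 : G1_pd A P rho)
  (x : nat -> forall i, 'cV[R]_(n i)) (y : nat -> 'cV[R]_l)
  (hseq : lgadmm_seq A P rho gam theta X b x y) :
  forall k : nat,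
    Hform A P rho gam (blocks_sub (x k.+1) (x k.+2)) (y k.+1 - y k.+2)
    <= Hform A P rho gam (blocks_sub (x k) (x k.+1)) (y k - y k.+1).
Proof.
move=> k; have P_sym i : (P i)^T = P i by case: (hP i).
exact: (Hform_dx_nonincreasing htheta hXcv hrho P_sym hseq k hG1 hP hgam).
Qed.
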